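(* Let $(\Omega,d)$ be a compact Hadamard space, let $n\ge1$, and fix $Y_1,\dots,Y_n\in\Omega$. Let $\Delta^{n-1}=\{w\in\mathbb{R}^n: w_i\ge0,\ \sum_i w_i=1\}$ and, for $w\in\Delta^{n-1}$, let $\mu(w)=\operatorname{argmin}_{y\in\Omega}\sum_{i=1}^n w_i d^2(y,Y_i)$ be the weighted Fréchet mean (which exists and is unique in a Hadamard space). Let $D=\sup_{u,v\in\Omega}d(u,v)$. Then for all $w_1,w_2\in\Delta^{n-1}$, \[d(\mu(w_1),\mu(w_2))\le D\sqrt{n}\,\|w_1-w_2\|_2.\]
   Context: A metric space $(\Omega,d)$ is a Hadamard space if it is complete and for every $\omega_1,\omega_2\in\Omega$ there exists $\alpha\in\Omega$ such that $d^2(\beta,\alpha)\le \tfrac12 d^2(\beta,\omega_1)+\tfrac12 d^2(\beta,\omega_2)-\tfrac14 d^2(\omega_1,\omega_2)$ for all $\beta\in\Omega$. $\|\cdot\|_2$ is the Euclidean norm on $\mathbb{R}^n$. *)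

From Stdlib Require Import Reals List.
Open Scope R_scope.

Fixpoint sumR (n : nat) (f : nat -> R) : R :=
  match n with
  | O => 0
  | S m => sumR m f + f m
  end.

Section Metric.
Variable (T : Type) (d : T -> T -> R).

Definition is_metric : Prop :=
  (forall x y, 0 <= d x y) /\
  (forall x y, d x y = 0 <-> x = y) /\
  (forall x y, d x y = d y x) /\
  (forall x y z, d x z <= d x y + d y z).

Definition cauchy_seq (u : nat -> T) : Prop :=
  forall eps, 0 < eps -> exists N, forall p q, (N <= p)%nat -> (N <= q)%nat ->
    d (u p) (u q) < eps.

Definition converges_to (u : nat -> T) (l : T) : Prop :=
  forall eps, 0 < eps -> exists N, forall p, (N <= p)%nat -> d (u p) l < eps.

Definition complete : Prop :=
  forall u, cauchy_seq u -> exists l, converges_to u l.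

Definition hadamard : Prop :=
  is_metric /\ complete /\
  forall w1 w2 : T, exists a : T, forall b : T,
    (d b a)^2 <= /2 * (d b w1)^2 + /2 * (d b w2)^2 - /4 * (d w1 w2)^2.

Definition open_set (U : T -> Prop) : Prop :=
  forall x, U x -> exists e, 0 < e /\ forall y, d x y < e -> U y.

Definition compact_space : Prop :=
  forall (I : Type) (U : I -> T -> Prop),
    (forall i, open_set (U i)) -> (forall x, exists i, U i x) ->
    exists l : list I, forall x, exists i, In i l /\ U i x.

Definition frechet_fun (n : nat) (Y : nat -> T) (w : nat -> R) (y : T) : R :=
  sumR n (fun i => w i * (d y (Y i))^2).

Definition is_frechet_mean (n : nat) (Y : nat -> T) (w : nat -> R) (m : T) : Prop :=
  forall y, frechet_fun n Y w m <= frechet_fun n Y w y.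

Definition is_diameter (D : R) : Prop :=
  is_lub (fun r => exists u v, r = d u v) D.

End Metric.

(* probability simplex Delta^{n-1}, vectors indexed by 0..n-1 *)
Definition in_simplex (n : nat) (w : nat -> R) : Prop :=
  (forall i, (i < n)%nat -> 0 <= w i) /\ sumR n w = 1.

Definition dist2 (n : nat) (w1 w2 : nat -> R) : R :=
  sqrt (sumR n (fun i => (w1 i - w2 i)^2)).

(** The Fréchet functional [F_w] of a Hadamard space is 2-uniformly convex
    around its minimiser: the midpoint inequality gives
    [F_w(a) <= (F_w(m) + F_w(y))/2 - d(m,y)^2/4] for the midpoint [a] of
    [m] and [y], and iterating this along midpoints yields the variance
    inequality [d(m,y)^2 <= F_w(y) - F_w(m)] for the minimiser [m].
    Adding the variance inequalities of [w1] at [m2] and of [w2] at [m1],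
    [2 e^2 <= sum_i (w1_i - w2_i) (d(m2,Y_i)^2 - d(m1,Y_i)^2) <= 2 D e |w1 - w2|_1]
    with [e = d(m1,m2)], and Cauchy-Schwarz bounds the l1 norm by
    [sqrt n] times the Euclidean one. *)

From Stdlib Require Import Reals Lra Lia.
Open Scope R_scope.

Lemma sumR_ext n f g :
  (forall i, (i < n)%nat -> f i = g i) -> sumR n f = sumR n g.
Proof.
  induction n as [|n IH]; intros Hfg; simpl; [reflexivity|].
  rewrite (Hfg n) by lia. f_equal. apply IH. intros i Hi. apply Hfg. lia.
Qed.

Lemma sumR_le n f g :
  (forall i, (i < n)%nat -> f i <= g i) -> sumR n f <= sumR n g.
Proof.
  induction n as [|n IH]; intros Hfg; simpl; [lra|].
  assert (f n <= g n) by (apply Hfg; lia).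
  assert (sumR n f <= sumR n g) by (apply IH; intros; apply Hfg; lia).
  lra.
Qed.

Lemma sumR_ge0 n f : (forall i, (i < n)%nat -> 0 <= f i) -> 0 <= sumR n f.
Proof.
  induction n as [|n IH]; intros Hf; simpl; [lra|].
  assert (0 <= f n) by (apply Hf; lia).
  assert (0 <= sumR n f) by (apply IH; intros; apply Hf; lia).
  lra.
Qed.

Lemma sumR_plus n f g : sumR n (fun i => f i + g i) = sumR n f + sumR n g.
Proof. induction n as [|n IH]; simpl; [ring|]. rewrite IH. ring. Qed.

Lemma sumR_minus n f g : sumR n (fun i => f i - g i) = sumR n f - sumR n g.
Proof. induction n as [|n IH]; simpl; [ring|]. rewrite IH. ring. Qed.

Lemma sumR_mult_l n c f : sumR n (fun i => c * f i) = c * sumR n f.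
Proof. induction n as [|n IH]; simpl; [ring|]. rewrite IH. ring. Qed.

Lemma sumR_mult_r n f c : sumR n (fun i => f i * c) = sumR n f * c.
Proof. induction n as [|n IH]; simpl; [ring|]. rewrite IH. ring. Qed.

Lemma two_mul_sumR_le n a x :
  2 * x * sumR n a <= sumR n (fun i => a i ^ 2) + INR n * x ^ 2.
Proof.
  induction n as [|n IH]; cbn [sumR]; [simpl; lra|].
  rewrite S_INR. pose proof (pow2_ge_0 (a n - x)). nra.
Qed.

Lemma sumR_sqr_le n a : sumR n a ^ 2 <= INR n * sumR n (fun i => a i ^ 2).
Proof.
  induction n as [|n IH]; cbn [sumR]; [simpl; lra|].
  rewrite S_INR. pose proof (two_mul_sumR_le n a (a n)). nra.
Qed.

Lemma sumR_abs_le n a :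
  sumR n (fun i => Rabs (a i)) <= sqrt (INR n) * sqrt (sumR n (fun i => a i ^ 2)).
Proof.
  set (S := sumR n (fun i => Rabs (a i))).
  assert (HS : 0 <= S) by (apply sumR_ge0; intros; apply Rabs_pos).
  assert (Habs : sumR n (fun i => Rabs (a i) ^ 2) = sumR n (fun i => a i ^ 2)).
  { apply sumR_ext. intros i _. apply pow2_abs. }
  rewrite <- sqrt_mult, <- (sqrt_pow2 S HS)
    by (apply pos_INR || (apply sumR_ge0; intros; apply pow2_ge_0)).
  apply sqrt_le_1_alt. rewrite <- Habs. apply sumR_sqr_le.
Qed.

Lemma le_of_forall_geometric c g : (forall K, (1 - (/2) ^ K) * c <= g) -> c <= g.
Proof.
  intros Hg. destruct (Rle_or_lt c g) as [|Hlt]; [assumption|exfalso].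
  assert (Hc : 0 < c) by (specialize (Hg O); simpl in Hg; lra).
  assert (Hhalf : Rabs (/2) < 1) by (rewrite Rabs_pos_eq; lra).
  destruct (pow_lt_1_zero (/2) Hhalf ((c - g) / c)) as [N HN].
  { apply Rdiv_lt_0_compat; lra. }
  specialize (HN N (Nat.le_refl N)). specialize (Hg N).
  pose proof (Rle_abs ((/2) ^ N)).
  assert ((/2) ^ N * c < c - g).
  { replace (c - g) with ((c - g) / c * c) by (field; lra).
    apply Rmult_lt_compat_r; lra. }
  lra.
Qed.

Section Metric.
Variables (T : Type) (d : T -> T -> R).
Hypothesis Hd : is_metric T d.

Lemma dist_sqr_diff_le x y z :
  Rabs (d x z ^ 2 - d y z ^ 2) <= d x y * (d x z + d y z).
Proof.
  destruct Hd as [Hpos [_ [Hsym Htri]]].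
  replace (d x z ^ 2 - d y z ^ 2) with ((d x z - d y z) * (d x z + d y z)) by ring.
  rewrite Rabs_mult, (Rabs_pos_eq (d x z + d y z))
    by (pose proof (Hpos x z); pose proof (Hpos y z); lra).
  apply Rmult_le_compat_r; [pose proof (Hpos x z); pose proof (Hpos y z); lra|].
  apply Rabs_le. pose proof (Htri x y z). pose proof (Htri y x z).
  rewrite (Hsym y x) in *. lra.
Qed.

Lemma midpoint_dist_ge x y a :
  (forall b, d b a ^ 2 <= /2 * d b x ^ 2 + /2 * d b y ^ 2 - /4 * d x y ^ 2) ->
  d x y <= 2 * d x a.
Proof.
  destruct Hd as [Hpos [Hzero [Hsym Htri]]]. intros Hmid.
  assert (Hya : d y a ^ 2 <= (/2 * d x y) ^ 2).
  { specialize (Hmid y). rewrite (proj2 (Hzero y y) eq_refl), (Hsym y x) in Hmid.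
    lra. }
  assert (d y a <= /2 * d x y) by (pose proof (Hpos y a); pose proof (Hpos x y); nra).
  pose proof (Htri x a y). rewrite (Hsym a y) in *. lra.
Qed.

Lemma frechet_fun_midpoint_le n Y w x y a :
  in_simplex n w ->
  (forall b, d b a ^ 2 <= /2 * d b x ^ 2 + /2 * d b y ^ 2 - /4 * d x y ^ 2) ->
  frechet_fun T d n Y w a
    <= /2 * frechet_fun T d n Y w x + /2 * frechet_fun T d n Y w y - /4 * d x y ^ 2.
Proof.
  destruct Hd as [_ [_ [Hsym _]]]. intros [Hw0 Hw1] Hmid. unfold frechet_fun.
  eapply Rle_trans.
  - apply sumR_le with (g := fun i =>
      /2 * (w i * d x (Y i) ^ 2) + /2 * (w i * d y (Y i) ^ 2) - w i * (/4 * d x y ^ 2)).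
    intros i Hi. specialize (Hmid (Y i)). rewrite !(Hsym (Y i)) in Hmid.
    pose proof (Hw0 i Hi). nra.
  - rewrite sumR_minus, sumR_plus, !sumR_mult_l, sumR_mult_r, Hw1. lra.
Qed.

Lemma frechet_fun_exchange_le n Y D (HD : forall u v, d u v <= D) w1 w2 x y :
  frechet_fun T d n Y w1 y - frechet_fun T d n Y w1 x
    + (frechet_fun T d n Y w2 x - frechet_fun T d n Y w2 y)
  <= 2 * D * d x y * sumR n (fun i => Rabs (w1 i - w2 i)).
Proof.
  destruct Hd as [Hpos [_ [Hsym _]]]. unfold frechet_fun.
  rewrite <- !sumR_minus, <- sumR_plus, <- sumR_mult_l.
  apply sumR_le. intros i _.
  pose proof (dist_sqr_diff_le y x (Y i)) as Hdiff. rewrite (Hsym y x) in Hdiff.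
  apply Rle_trans with (Rabs (w1 i - w2 i) * Rabs (d y (Y i) ^ 2 - d x (Y i) ^ 2)).
  - rewrite <- Rabs_mult. eapply Rle_trans; [|apply Rle_abs]. right. ring.
  - rewrite (Rmult_comm (2 * D * d x y)).
    apply Rmult_le_compat_l; [apply Rabs_pos|].
    pose proof (HD x (Y i)). pose proof (HD y (Y i)). pose proof (Hpos x y).
    nra.
Qed.

End Metric.

Section VarianceInequality.
Variables (T : Type) (d : T -> T -> R).
Hypothesis Hhad : hadamard T d.
Variables (n : nat) (Y : nat -> T) (w : nat -> R) (m : T).
Hypothesis Hw : in_simplex n w.
Hypothesis Hm : is_frechet_mean T d n Y w m.

Let F := frechet_fun T d n Y w.

Lemma frechet_gap_improve c : 0 <= c ->
  (forall y, c * d m y ^ 2 <= F y - F m) ->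
  forall y, (1 + c) / 2 * d m y ^ 2 <= F y - F m.
Proof.
  destruct Hhad as [Hd [_ Hmid]]. intros Hc Hgap y.
  destruct (Hmid m y) as [a Ha].
  pose proof (frechet_fun_midpoint_le T d Hd n Y w m y a Hw Ha) as HFa.
  pose proof (midpoint_dist_ge T d Hd m y a Ha) as Hma.
  assert (Hma2 : d m y ^ 2 <= 4 * d m a ^ 2).
  { replace (4 * d m a ^ 2) with ((2 * d m a) ^ 2) by ring.
    apply pow_incr. split; [apply (proj1 Hd)|exact Hma]. }
  specialize (Hgap a). unfold F in *. nra.
Qed.

Lemma frechet_gap_geometric K y : (1 - (/2) ^ K) * d m y ^ 2 <= F y - F m.
Proof.
  revert y. induction K as [|K IH]; intros y.
  - simpl. specialize (Hm y). unfold F. lra.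
  - assert (HK : 0 <= 1 - (/2) ^ K).
    { pose proof (pow_incr (/2) 1 K ltac:(lra)). rewrite pow1 in *. lra. }
    replace (1 - (/2) ^ S K) with ((1 + (1 - (/2) ^ K)) / 2) by (simpl; field).
    exact (frechet_gap_improve _ HK IH y).
Qed.

Lemma frechet_variance_inequality y : d m y ^ 2 <= F y - F m.
Proof. apply le_of_forall_geometric. intros K. apply frechet_gap_geometric. Qed.

End VarianceInequality.

Lemma frechet_mean_dist_le_l1 (T : Type) (d : T -> T -> R) (Hhad : hadamard T d)
  (n : nat) (Y : nat -> T) (D : R) (HD : forall u v, d u v <= D)
  (w1 w2 : nat -> R) (Hw1 : in_simplex n w1) (Hw2 : in_simplex n w2)
  (m1 m2 : T) (Hm1 : is_frechet_mean T d n Y w1 m1)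
  (Hm2 : is_frechet_mean T d n Y w2 m2) :
  d m1 m2 <= D * sumR n (fun i => Rabs (w1 i - w2 i)).
Proof.
  pose proof Hhad as [Hd _]. pose proof Hd as [Hpos [_ [Hsym _]]].
  pose proof (frechet_variance_inequality T d Hhad n Y w1 m1 Hw1 Hm1 m2) as V1.
  pose proof (frechet_variance_inequality T d Hhad n Y w2 m2 Hw2 Hm2 m1) as V2.
  pose proof (frechet_fun_exchange_le T d Hd n Y D HD w1 w2 m1 m2) as Hex.
  rewrite (Hsym m2 m1) in V2.
  set (S := sumR n (fun i => Rabs (w1 i - w2 i))) in *.
  assert (HS : 0 <= S) by (apply sumR_ge0; intros; apply Rabs_pos).
  assert (HD0 : 0 <= D) by (pose proof (Hpos m1 m2); pose proof (HD m1 m2); lra).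
  assert (Hquad : d m1 m2 * d m1 m2 <= D * S * d m1 m2) by nra.
  destruct (Hpos m1 m2) as [He|He]; [nra|rewrite <- He; nra].
Qed.

Theorem lemma4p3 (T : Type) (d : T -> T -> R)
  (Hhad : hadamard T d) (Hcpt : compact_space T d)
  (n : nat) (Hn : (1 <= n)%nat) (Y : nat -> T)
  (D : R) (HD : is_diameter T d D)
  (w1 w2 : nat -> R) (Hw1 : in_simplex n w1) (Hw2 : in_simplex n w2)
  (m1 m2 : T) (Hm1 : is_frechet_mean T d n Y w1 m1)
  (Hm2 : is_frechet_mean T d n Y w2 m2) :
  d m1 m2 <= D * sqrt (INR n) * dist2 n w1 w2.
Proof.
  assert (HDb : forall u v, d u v <= D) by (intros u v; apply (proj1 HD); eauto).
  assert (HD0 : 0 <= D).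
  { pose proof (proj1 (proj1 Hhad) m1 m1). pose proof (HDb m1 m1). lra. }
  eapply Rle_trans.
  - exact (frechet_mean_dist_le_l1 T d Hhad n Y D HDb w1 w2 Hw1 Hw2 m1 m2 Hm1 Hm2).
  - rewrite Rmult_assoc. apply Rmult_le_compat_l; [exact HD0|].
    apply sumR_abs_le.
Qed.
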